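(* Let $A$ be a wqo and $n\in\mathbb{N}$. Then $\mathbf{w}(A\times \Gamma_n) = \mathbf{w}(A)\otimes n$.
   Context: A wqo (well quasi-order) is a quasi-order with no infinite bad sequence, where a sequence $x_0,x_1,\dots$ is bad if there are no $i<j$ with $x_i\le x_j$. Two elements $x,y$ are incomparable ($x\perp y$) if neither $x\le y$ nor $y\le x$. For a wqo $A$, let $\mathrm{Inco}(A)$ be the set of nonempty finite sequences of pairwise incomparable elements of $A$, viewed as a (well-founded) forest where $s\frown y$ is a child of $s$. Its rank function is $r(s)=\sup\{r(t)+1: t \text{ a child of } s\}$ (so leaves have rank $0$), and the width is $\mathbf{w}(A)=\sup_{s\in \mathrm{Inco}(A)}(r(s)+1)$ (with $\mathbf{w}(\emptyset)=0$). $\Gamma_n$ denotes the antichain with $n$ elements. Cartesian products $A\times B$ carry the componentwise order. $\otimes$ denotes the natural (Hessenberg) product of ordinals. *)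

From Stdlib Require Import List Arith.
Import ListNotations.

Set Implicit Arguments.

(** * Ordinals as well-founded trees (Aczel / Brouwer style, arbitrary branching).
    [OSup I f] denotes the least ordinal strictly greater than every [f i],
    i.e. sup_i (f i + 1). *)
Inductive Ord : Type :=
| OSup : forall I : Type, (I -> Ord) -> Ord.
Arguments OSup : clear implicits.

(** [ole a b]: a <= b.  OSup I f <= OSup J g iff every f i is strictly below
    OSup J g, i.e. every f i <= some g j. *)
Fixpoint ole (a b : Ord) {struct a} : Prop :=
  match a, b with
  | OSup X f, OSup Y g => forall i, exists j, ole (f i) (g j)
  end.

Definition oeq (a b : Ord) : Prop := ole a b /\ ole b a.

Definition ozero : Ord := OSup Empty_set (fun e => match e with end).

(** Natural (Hessenberg) sum: a (+) b is the least ordinal strictly above all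
    a' (+) b (a' < a) and a (+) b' (b' < b). *)
Fixpoint osum (a : Ord) : Ord -> Ord :=
  fix osum_a (b : Ord) : Ord :=
    match a, b with
    | OSup X f, OSup Y g =>
        OSup (X + Y)%type
             (fun k => match k with
                       | inl i => osum (f i) (OSup Y g)
                       | inr j => osum_a (g j)
                       end)
    end.

Fixpoint onat_mul (a : Ord) (n : nat) : Ord :=
  match n with
  | 0 => ozero
  | S m => osum (onat_mul a m) a
  end.

Definition quasi_order (A : Type) (le : A -> A -> Prop) : Prop :=
  (forall x, le x x) /\ (forall x y z, le x y -> le y z -> le x z).

Definition wqo (A : Type) (le : A -> A -> Prop) : Prop :=
  quasi_order le /\
  (forall f : nat -> A, exists i j, i < j /\ le (f i) (f j)).

Definition incomp (A : Type) (le : A -> A -> Prop) (x y : A) : Prop :=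
  ~ le x y /\ ~ le y x.

Definition Inco (A : Type) (le : A -> A -> Prop) : Type :=
  { s : list A | s <> [] /\ ForallOrdPairs (incomp le) s }.

(** Rank in the forest Inco(A) (child of s: s ++ [y] with y incomparable to
    all entries of s):  r(s) = sup { r(t) + 1 : t child of s }.
    [HasRank le s a] : the rank of s exists and is (equivalent to) a. *)
Inductive HasRank (A : Type) (le : A -> A -> Prop) (s : list A) : Ord -> Prop :=
| HasRank_intro :
    forall g : { y : A | Forall (incomp le y) s } -> Ord,
      (forall y, HasRank le (s ++ [proj1_sig y]) (g y)) ->
      forall a, oeq a (OSup _ g) -> HasRank le s a.

(** Width: w(A) = sup_{s in Inco(A)} (r(s) + 1)  (= 0 if A is empty). *)
Definition HasWidth (A : Type) (le : A -> A -> Prop) (a : Ord) : Prop :=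
  exists g : Inco le -> Ord,
    (forall s, HasRank le (proj1_sig s) (g s)) /\ oeq a (OSup _ g).

Definition Gamma (n : nat) : Type := { i : nat | i < n }.
Definition Gamma_le (n : nat) (i j : Gamma n) : Prop := i = j.

Definition prod_le (A B : Type) (leA : A -> A -> Prop) (leB : B -> B -> Prop)
  (x y : A * B) : Prop := leA (fst x) (fst y) /\ leB (snd x) (snd y).

(** Ranks in [Inco(A)] are ranks in a forest, and the rank of a node only depends
    on the node up to bisimulation.  In the forest of a product of forests the
    children of a pair are obtained by growing either component, so ranks add
    up by the natural sum.  A sequence [s] of pairwise incomparable elements of
    [A * Gamma n] is determined, up to bisimulation, by its [n] columns
    [s_i = (a | (a, i) in s)]: an element [(a, i)] may be appended to [s]
    exactly when [a] may be appended to [s_i], and only the column [s_i]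
    changes.  Hence [Inco(A * Gamma n)] is bisimilar to the [n]-fold product of
    [Inco(A)], and the rank of its root is [r(nil) (x) n].  Finally the width
    of a wqo is the rank of the empty sequence, which exists because an
    infinite branch of [Inco(A)] would be an infinite bad sequence. *)

From Stdlib Require Import List Arith Lia.
From Stdlib Require Import Classical ClassicalEpsilon.
Import ListNotations.

Set Implicit Arguments.

Lemma ole_refl a : ole a a.
Proof. induction a as [X f IH]; simpl; intros i; exists i; apply IH. Qed.

Lemma ole_trans a b c : ole a b -> ole b c -> ole a c.
Proof.
  revert b c; induction a as [X f IH]; intros [Y g] [Z h]; simpl; intros H1 H2 i.
  destruct (H1 i) as [j Hj]; destruct (H2 j) as [k Hk].
  exists k; eapply IH; eauto.
Qed.

Lemma ole_OSup a I (f : I -> Ord) i : ole a (f i) -> ole a (OSup I f).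
Proof.
  revert I f i; induction a as [X h IH]; intros I f i H; simpl; intros k.
  exists i; destruct (f i) as [Z q]; simpl in H.
  destruct (H k) as [m Hm]; exact (IH k Z q m Hm).
Qed.

Lemma oeq_refl a : oeq a a.
Proof. split; apply ole_refl. Qed.

Lemma oeq_sym a b : oeq a b -> oeq b a.
Proof. intros [H1 H2]; split; assumption. Qed.

Lemma oeq_trans a b c : oeq a b -> oeq b c -> oeq a c.
Proof. intros [H1 H2] [H3 H4]; split; eapply ole_trans; eauto. Qed.

Lemma osum_mono a a' b b' : ole a a' -> ole b b' -> ole (osum a b) (osum a' b').
Proof.
  revert a' b b'; induction a as [X f IHa]; intros [X' f'] b.
  induction b as [Y g IHb]; intros [Y' g'] Ha Hb; simpl; intros [i|j].
  - destruct (Ha i) as [i' Hi]; exists (inl i'); exact (IHa i _ _ _ Hi Hb).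
  - destruct (Hb j) as [j' Hj]; exists (inr j'); exact (IHb j _ Ha Hj).
Qed.

Lemma osum_OSup X (f : X -> Ord) Y (g : Y -> Ord) :
  osum (OSup X f) (OSup Y g) =
  OSup (X + Y) (fun k => match k with
                         | inl i => osum (f i) (OSup Y g)
                         | inr j => osum (OSup X f) (g j)
                         end).
Proof. reflexivity. Qed.

Lemma osum_oeq a a' b b' : oeq a a' -> oeq b b' -> oeq (osum a b) (osum a' b').
Proof. intros [H1 H2] [H3 H4]; split; apply osum_mono; assumption. Qed.

Lemma onat_mul_oeq a a' n : oeq a a' -> oeq (onat_mul a n) (onat_mul a' n).
Proof. intros H; induction n; simpl; [apply oeq_refl | apply osum_oeq; assumption]. Qed.

Record Forest := {
  node : Type;
  child : node -> Type;
  grow : forall s, child s -> node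
}.
Arguments child {f} s.
Arguments grow {f} s c.

Inductive Rank (F : Forest) (s : node F) : Ord -> Prop :=
| Rank_intro (g : child s -> Ord) :
    (forall c, Rank F (grow s c) (g c)) -> forall a, oeq a (OSup _ g) -> Rank F s a.

Lemma Rank_of_children (F : Forest) (s : node F) :
  (forall c : child s, exists r, Rank F (grow s c) r) -> exists r, Rank F s r.
Proof.
  intros E.
  set (g := fun c => proj1_sig (constructive_indefinite_description _ (E c))).
  exists (OSup _ g); apply Rank_intro with g; [|apply oeq_refl].
  intros c; exact (proj2_sig (constructive_indefinite_description _ (E c))).
Qed.

Section Bisimulation.

Variables F G : Forest.
Variable R : node F -> node G -> Prop.

Hypothesis R_back : forall s t, R s t ->
  forall d : child t, exists c : child s, R (grow s c) (grow t d).

Lemma Rank_bisim_ex s a : Rank F s a -> forall t, R s t -> exists b, Rank G t b.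
Proof.
  intros H; induction H as [s g Hg IH a Ha]; intros t HR.
  apply Rank_of_children; intros d.
  destruct (R_back HR d) as [c Hc]; exact (IH c _ Hc).
Qed.

Hypothesis R_forth : forall s t, R s t ->
  forall c : child s, exists d : child t, R (grow s c) (grow t d).

Lemma Rank_bisim s a : Rank F s a -> forall t b, R s t -> Rank G t b -> oeq a b.
Proof.
  intros H; induction H as [s g Hg IH a Ha]; intros t b HR Hb; destruct Hb as [g' Hg' b Hb].
  eapply oeq_trans; [exact Ha|]; eapply oeq_trans; [|apply oeq_sym; exact Hb].
  split; simpl.
  - intros c; destruct (R_forth HR c) as [d Hd]; exists d; exact (proj1 (IH c _ _ Hd (Hg' d))).
  - intros d; destruct (R_back HR d) as [c Hc]; exists c; exact (proj2 (IH c _ _ Hc (Hg' d))).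
Qed.

End Bisimulation.

Lemma Rank_unique (F : Forest) s a b : Rank F s a -> Rank F s b -> oeq a b.
Proof.
  intros Ha Hb; apply (@Rank_bisim F F eq) with s s; auto;
    intros s0 t E c; subst; exists c; reflexivity.
Qed.

Lemma Rank_grow_le (F : Forest) s (c : child s) a b :
  Rank F s a -> Rank F (grow s c) b -> ole b a.
Proof.
  intros Ha Hb; destruct Ha as [g Hg a Ha].
  apply ole_trans with (g c); [apply (proj1 (Rank_unique Hb (Hg c)))|].
  apply ole_trans with (OSup _ g); [|apply Ha].
  apply ole_OSup with c; apply ole_refl.
Qed.

Definition prodForest (F G : Forest) : Forest := {|
  node := node F * node G;
  child s := (child (fst s) + child (snd s))%type;
  grow s c := match c with
              | inl c1 => (grow (fst s) c1, snd s)
              | inr c2 => (fst s, grow (snd s) c2)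
              end |}.

Lemma Rank_prod (F G : Forest) s a t b :
  Rank F s a -> Rank G t b -> Rank (prodForest F G) (s, t) (osum a b).
Proof.
  intros H; revert t b; induction H as [s g1 Hg1 IH1 a Ha].
  intros t b H; induction H as [t g2 Hg2 IH2 b Hb].
  apply Rank_intro with (fun c : child (f := prodForest F G) (s, t) =>
     match c with inl c1 => osum (g1 c1) b | inr c2 => osum a (g2 c2) end).
  - intros [c1|c2]; simpl; [apply IH1; apply Rank_intro with g2 | apply IH2]; auto.
  - eapply oeq_trans; [apply osum_oeq; [exact Ha | exact Hb]|].
    rewrite osum_OSup; split; intros [c1|c2];
      [exists (inl c1) | exists (inr c2) | exists (inl c1) | exists (inr c2)];
      apply osum_mono; solve [apply ole_refl | apply Ha | apply Hb].
Qed.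

Definition leafForest : Forest :=
  {| node := unit; child _ := Empty_set; grow _ c := match c with end |}.

Lemma Rank_leaf : Rank leafForest tt ozero.
Proof.
  apply Rank_intro with (fun c : Empty_set => match c with end);
    [intros [] | split; intros []].
Qed.

Fixpoint powerForest (F : Forest) (k : nat) : Forest :=
  match k with
  | 0 => leafForest
  | S k => prodForest (powerForest F k) F
  end.

Fixpoint diagNode (F : Forest) (s : node F) (k : nat) : node (powerForest F k) :=
  match k with
  | 0 => tt
  | S k => (diagNode F s k, s)
  end.

Lemma Rank_power_ex (F : Forest) :
  (forall s, exists r, Rank F s r) -> forall k p, exists r, Rank (powerForest F k) p r.
Proof.
  intros Ex k; induction k as [|k IHk]; intros p.
  - destruct p; exists ozero; exact Rank_leaf.
  - destruct p as [p s]; destruct (IHk p) as [r1 H1]; destruct (Ex s) as [r2 H2].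
    exists (osum r1 r2); exact (Rank_prod H1 H2).
Qed.

Lemma Rank_diag (F : Forest) s r k :
  Rank F s r -> Rank (powerForest F k) (diagNode F s k) (onat_mul r k).
Proof.
  intros H; induction k; [exact Rank_leaf | exact (Rank_prod IHk H)].
Qed.

Section ExtensionSequence.

Variables (A : Type) (P : list A -> Prop) (R : A -> A -> Prop).
Hypothesis extend : forall s, P s -> exists y, Forall (R y) s /\ P (s ++ [y]).

Let next (s : {s | P s}) : {y | Forall (R y) (proj1_sig s) /\ P (proj1_sig s ++ [y])} :=
  constructive_indefinite_description _ (extend (proj2_sig s)).

Fixpoint prefix (s0 : {s | P s}) (k : nat) : {s | P s} :=
  match k with
  | 0 => s0
  | S k => let s := prefix s0 k in
           exist _ (proj1_sig s ++ [proj1_sig (next s)]) (proj2 (proj2_sig (next s)))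
  end.

Lemma extension_sequence s0 : P s0 -> exists f : nat -> A, forall i j, i < j -> R (f j) (f i).
Proof.
  intros H0; set (f k := proj1_sig (next (prefix (exist _ s0 H0) k))); exists f.
  assert (Hin : forall j i, i < j -> In (f i) (proj1_sig (prefix (exist _ s0 H0) j))).
  { induction j as [|j IH]; intros i Hi; [lia|]; simpl; apply in_app_iff.
    destruct (Nat.eq_dec i j) as [->|ne]; [right; left; reflexivity | left; apply IH; lia]. }
  intros i j Hij; apply (proj1 (Forall_forall _ _)
    (proj1 (proj2_sig (next (prefix (exist _ s0 H0) j))))), Hin, Hij.
Qed.

End ExtensionSequence.

Section Inco.

Variables (A : Type) (le : A -> A -> Prop).

Definition incoForest : Forest := {|
  node := list A;
  child s := {y : A | Forall (incomp le y) s};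
  grow s y := s ++ [proj1_sig y] |}.

Lemma HasRank_Rank s a : HasRank le s a <-> Rank incoForest s a.
Proof.
  split; intros H; induction H as [s g Hg IH a Ha];
    [apply Rank_intro with g | apply HasRank_intro with g]; auto.
Qed.

Lemma HasRank_unique s a b : HasRank le s a -> HasRank le s b -> oeq a b.
Proof. rewrite !HasRank_Rank; apply Rank_unique. Qed.

Lemma wqo_HasRank_ex : wqo le -> forall s, exists r, HasRank le s r.
Proof.
  intros [_ Hgood] s0; apply NNPP; intros H0.
  set (P s := ~ exists r, HasRank le s r).
  assert (extend : forall s, P s -> exists y, Forall (incomp le y) s /\ P (s ++ [y])).
  { intros s Hs; apply NNPP; intros Hn; apply Hs.
    setoid_rewrite HasRank_Rank; apply Rank_of_children; intros [y Hy].
    setoid_rewrite <- HasRank_Rank; apply NNPP; intros Hr; apply Hn; exists y; auto. }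
  destruct (extension_sequence _ _ extend s0 H0) as [f Hf].
  destruct (Hgood f) as [i [j [Hij Hle]]]; exact (proj2 (Hf i j Hij) Hle).
Qed.

Hypothesis HasRank_ex : forall s, exists r, HasRank le s r.

Lemma HasWidth_ex : exists a, HasWidth le a.
Proof.
  set (rank (s : Inco le) := constructive_indefinite_description _ (HasRank_ex (proj1_sig s))).
  exists (OSup _ (fun s => proj1_sig (rank s))), (fun s => proj1_sig (rank s)).
  split; [intros s; exact (proj2_sig (rank s)) | apply oeq_refl].
Qed.

Lemma ForallOrdPairs_snoc (R : A -> A -> Prop) l y :
  ForallOrdPairs R (l ++ [y]) -> ForallOrdPairs R l /\ Forall (fun b => R b y) l.
Proof.
  induction l as [|a l IH]; intros H; [split; constructor|].
  inversion H as [|a' l' Ha Hl]; subst.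
  destruct (IH Hl) as [H1 H2]; apply Forall_app in Ha as [Ha1 Ha2].
  inversion Ha2; subst; split; constructor; auto.
Qed.

Lemma HasRank_cons_le x t r r' :
  ForallOrdPairs (incomp le) (x :: t) -> HasRank le (x :: t) r -> HasRank le [x] r' -> ole r r'.
Proof.
  revert r; induction t as [|y t IH] using rev_ind; intros r HF H H'.
  - apply (HasRank_unique H H').
  - change (x :: t ++ [y]) with ((x :: t) ++ [y]) in HF, H.
    apply ForallOrdPairs_snoc in HF as [HF Hy].
    assert (Hy' : Forall (incomp le y) (x :: t)).
    { eapply Forall_impl; [|exact Hy]; intros b [h1 h2]; split; assumption. }
    destruct (HasRank_ex (x :: t)) as [rm Hm]; rewrite HasRank_Rank in H, Hm.
    apply ole_trans with rm.
    + exact (Rank_grow_le (F := incoForest) (s := x :: t) (exist _ y Hy') Hm H).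
    + apply IH; [exact HF | now apply HasRank_Rank | exact H'].
Qed.

(** The width sup (r(s) + 1) over nonempty [s] is attained on singletons,
    and those are exactly the children of the root. *)
Lemma HasWidth_rank_nil r0 a : HasRank le [] r0 -> HasWidth le a -> oeq a r0.
Proof.
  intros H0 [g [Hg Ha]]; destruct H0 as [g0 Hg0 r0 Hr0].
  eapply oeq_trans; [exact Ha|]; eapply oeq_trans; [|apply oeq_sym; exact Hr0]; split.
  - intros [[|x t] [Hne HF]]; [congruence|].
    exists (exist _ x (Forall_nil _)).
    exact (HasRank_cons_le HF (Hg (exist _ (x :: t) (conj Hne HF)))
                              (Hg0 (exist _ x (Forall_nil _)))).
  - intros [y Hy].
    assert (Hs : [y] <> [] /\ ForallOrdPairs (incomp le) [y])
      by (split; repeat constructor; discriminate).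
    exists (exist _ [y] Hs); apply (HasRank_unique (Hg0 (exist _ y Hy)) (Hg (exist _ [y] Hs))).
Qed.

End Inco.

Section Columns.

Variables (A : Type) (le : A -> A -> Prop) (n : nat).

Notation prodGamma_le := (prod_le le (@Gamma_le n)).

Lemma Gamma_eq (g h : Gamma n) : proj1_sig g = proj1_sig h -> g = h.
Proof. destruct g, h; simpl; intros ->; f_equal; apply le_unique. Qed.

Definition column (i : nat) (s : list (A * Gamma n)) : list A :=
  map fst (filter (fun x => Nat.eqb (proj1_sig (snd x)) i) s).

Lemma column_snoc i s a (g : Gamma n) :
  column i (s ++ [(a, g)]) = column i s ++ (if Nat.eqb (proj1_sig g) i then [a] else []).
Proof.
  unfold column; rewrite filter_app, map_app; simpl.
  destruct (Nat.eqb (proj1_sig g) i); reflexivity.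
Qed.

Lemma column_snoc_eq i s a (g : Gamma n) :
  proj1_sig g = i -> column i (s ++ [(a, g)]) = column i s ++ [a].
Proof. intros <-; now rewrite column_snoc, Nat.eqb_refl. Qed.

Lemma column_snoc_neq i s a (g : Gamma n) :
  proj1_sig g <> i -> column i (s ++ [(a, g)]) = column i s.
Proof. intros E; rewrite column_snoc; apply Nat.eqb_neq in E as ->; apply app_nil_r. Qed.

Lemma Forall_incomp_prodGamma a (g : Gamma n) s :
  Forall (incomp prodGamma_le (a, g)) s <-> Forall (incomp le a) (column (proj1_sig g) s).
Proof.
  induction s as [|[b h] s IH]; [split; constructor|].
  unfold column; simpl; fold (column (proj1_sig g) s).
  rewrite Forall_cons_iff, IH; unfold incomp, prod_le, Gamma_le; simpl.
  destruct (Nat.eqb_spec (proj1_sig h) (proj1_sig g)) as [E|E].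
  - apply Gamma_eq in E; subst h; simpl; rewrite Forall_cons_iff; intuition.
  - split; [intros [_ H]; exact H | intros H; split; [|exact H]].
    split; intros [_ ->]; apply E; reflexivity.
Qed.

Fixpoint columns (k : nat) (s : list (A * Gamma n)) : node (powerForest (incoForest le) k) :=
  match k with
  | 0 => tt
  | S k => (columns k s, column k s)
  end.

Lemma columns_nil k : columns k [] = diagNode (incoForest le) [] k.
Proof. induction k as [|k IHk]; simpl; [reflexivity | now rewrite IHk]. Qed.

Lemma columns_snoc_ge k s a (g : Gamma n) :
  k <= proj1_sig g -> columns k (s ++ [(a, g)]) = columns k s.
Proof.
  induction k; intros Hk; simpl; [reflexivity|].
  rewrite IHk, column_snoc_neq by lia; reflexivity.
Qed.

Lemma columns_grow_forth k s (c : child (columns k s)) : k <= n ->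
  exists a (g : Gamma n), proj1_sig g < k /\ Forall (incomp le a) (column (proj1_sig g) s) /\
    grow (columns k s) c = columns k (s ++ [(a, g)]).
Proof.
  induction k as [|k IHk]; intros Hkn; [destruct c|].
  destruct c as [c|[y Hy]].
  - destruct (IHk c ltac:(lia)) as [a [g [Hg [Hf Hc]]]].
    exists a, g; repeat split; [lia | assumption |].
    simpl; rewrite Hc, column_snoc_neq by lia; reflexivity.
  - exists y, (exist _ k Hkn : Gamma n); repeat split; [simpl; lia|exact Hy|]; simpl.
    rewrite columns_snoc_ge, column_snoc_eq by (simpl; lia); reflexivity.
Qed.

Lemma columns_grow_back k s a (g : Gamma n) : proj1_sig g < k ->
  Forall (incomp le a) (column (proj1_sig g) s) ->
  exists c : child (columns k s), grow (columns k s) c = columns k (s ++ [(a, g)]).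
Proof.
  induction k as [|k IHk]; intros Hg Hf; [lia|].
  destruct (Nat.eq_dec (proj1_sig g) k) as [<-|Hneq].
  - exists (inr (exist _ a Hf)); simpl.
    rewrite columns_snoc_ge, column_snoc_eq by lia; reflexivity.
  - destruct (IHk ltac:(lia) Hf) as [c Hc]; exists (inl c); simpl.
    rewrite Hc, column_snoc_neq by exact Hneq; reflexivity.
Qed.

Let columns_rel (p : node (powerForest (incoForest le) n))
                (t : node (incoForest prodGamma_le)) := p = columns n t.

Lemma columns_bisim_back p t : columns_rel p t ->
  forall d : child (f := incoForest prodGamma_le) t,
  exists c : child p, grow p c = columns n (grow (f := incoForest prodGamma_le) t d).
Proof.
  intros -> [[a g] Hd]; simpl.
  apply columns_grow_back; [exact (proj2_sig g) | now apply Forall_incomp_prodGamma].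
Qed.

Lemma columns_bisim_forth p t : columns_rel p t ->
  forall c : child p, exists d : child (f := incoForest prodGamma_le) t,
  grow p c = columns n (grow (f := incoForest prodGamma_le) t d).
Proof.
  intros -> c; destruct (@columns_grow_forth n t c (le_n n)) as [a [g [_ [Hf Hc]]]].
  exists (exist _ (a, g) (proj2 (Forall_incomp_prodGamma a g t) Hf)); exact Hc.
Qed.

Lemma HasRank_prodGamma_ex :
  (forall s, exists r, HasRank le s r) -> forall t, exists r, HasRank prodGamma_le t r.
Proof.
  intros Ex t; setoid_rewrite HasRank_Rank.
  destruct (Rank_power_ex (F := incoForest le)) with n (columns n t) as [r Hr].
  { intros s; destruct (Ex s) as [r Hr]; exists r; now apply HasRank_Rank. }
  exact (Rank_bisim_ex (incoForest prodGamma_le) columns_rel columns_bisim_back Hr _ eq_refl).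
Qed.

Lemma HasRank_prodGamma_nil r0 rP :
  HasRank le [] r0 -> HasRank prodGamma_le [] rP -> oeq (onat_mul r0 n) rP.
Proof.
  rewrite !HasRank_Rank; intros H0 HP.
  apply (Rank_bisim columns_rel columns_bisim_back columns_bisim_forth
           (Rank_diag n H0) (t := []));
    [symmetry; apply columns_nil | exact HP].
Qed.

End Columns.

Theorem mainTheorem1 (A : Type) (le : A -> A -> Prop) (n : nat) (Hwqo : wqo le) :
  (exists a, HasWidth le a) /\
  (exists b, HasWidth (prod_le le (@Gamma_le n)) b) /\
  (forall a b, HasWidth le a -> HasWidth (prod_le le (@Gamma_le n)) b ->
     oeq b (onat_mul a n)).
Proof.
  pose proof (wqo_HasRank_ex Hwqo) as ExA.
  pose proof (HasRank_prodGamma_ex (n := n) ExA) as ExP.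
  split; [exact (HasWidth_ex ExA)|]; split; [exact (HasWidth_ex ExP)|].
  intros a b Ha Hb.
  destruct (ExA []) as [r0 H0]; destruct (ExP []) as [rP HP].
  apply oeq_trans with rP; [exact (HasWidth_rank_nil ExP HP Hb)|].
  apply oeq_trans with (onat_mul r0 n); [apply oeq_sym, (HasRank_prodGamma_nil H0 HP)|].
  apply onat_mul_oeq, oeq_sym, (HasWidth_rank_nil ExA H0 Ha).
Qed.
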